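(* Fix $b,c,d\in\mathbb C$ with $|c|<1$ and $|d|<1$. Define $f\colon\mathbb R^2\to\mathbb R$ by \[ f(x,y)=\Re\left[\frac{2(x+iy)\overline b+(x+iy)^2\overline d+\overline{b^2}c}{1-c\overline d}-\frac{|x+iy|^2+(x+iy)^2\overline c}{1-|c|^2}-\frac{|b|^2+\overline{b^2}d}{1-|d|^2}\right]. \] Then $f$ has a unique critical point $(x_0,y_0)$, which satisfies \[ x_0+iy_0=\frac{\overline b(d-c)+b(1-c\overline d)}{1-|d|^2}, \] and $\sup_{(x,y)\in\mathbb R^2}f(x,y)=f(x_0,y_0)=0$. *)

From Stdlib Require Import Reals.
From Coquelicot Require Import Coquelicot.
Open Scope C_scope.

Definition f54 (b c d : C) (x y : R) : R :=
  let z : C := (x, y) in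
  Re ( (RtoC 2 * z * Cconj b + z * z * Cconj d + Cconj (b * b) * c)
         / (RtoC 1 - c * Cconj d)
     - (RtoC (Cmod z ^ 2) + z * z * Cconj c) / RtoC (1 - Cmod c ^ 2)
     - (RtoC (Cmod b ^ 2) + Cconj (b * b) * d) / RtoC (1 - Cmod d ^ 2)).

Definition critical_point (g : R -> R -> R) (x0 y0 : R) : Prop :=
  is_derive (fun t => g t y0) x0 0%R /\ is_derive (fun t => g x0 t) y0 0%R.

(* Completing the square around z0 := (conj b (d - c) + b (1 - c conj d)) / (1 - |d|^2) gives
   f(z) = Re (w (z - z0)^2) - a |z - z0|^2  with  w = (conj d - conj c) / ((1 - |c|^2)(1 - c conj d))
   and  a = 1 / (1 - |c|^2).  The identity |1 - c conj d|^2 = |d - c|^2 + (1 - |c|^2)(1 - |d|^2)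
   shows |w| < a, so the quadratic form is negative semidefinite (Re (w u^2) <= |w| |u|^2) and its
   gradient, a linear map of determinant 4 (a^2 - |w|^2) > 0, vanishes only at u = 0. *)

From Stdlib Require Import Reals Lra Psatz.
From Coquelicot Require Import Coquelicot.
Open Scope C_scope.

Lemma Cmod_one_sub_mul_conj_sqr (c d : C) :
  (Cmod (1 - c * Cconj d) ^ 2 = Cmod (d - c) ^ 2 + (1 - Cmod c ^ 2) * (1 - Cmod d ^ 2))%R.
Proof.
  rewrite !Cmod2_alt; destruct c as [c1 c2], d as [d1 d2]; simpl; ring.
Qed.

Lemma Cmod_sub_lt_Cmod_one_sub_mul_conj (c d : C) :
  (Cmod c < 1)%R -> (Cmod d < 1)%R -> (Cmod (d - c) < Cmod (1 - c * Cconj d))%R.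
Proof.
  intros hc hd.
  pose proof (Cmod_one_sub_mul_conj_sqr c d) as E.
  pose proof (Cmod_ge_0 c); pose proof (Cmod_ge_0 d).
  pose proof (Cmod_ge_0 (d - c)); pose proof (Cmod_ge_0 (1 - c * Cconj d)).
  assert (0 < (1 - Cmod c ^ 2) * (1 - Cmod d ^ 2))%R
    by (apply Rmult_lt_0_compat; nra).
  nra.
Qed.

Definition cquad (w : C) (a : R) (z : C) : R := (Re (w * z * z) - a * Cmod z ^ 2)%R.

Lemma cquad_coord (w : C) (a u v : R) :
  cquad w a (u, v) = (Re w * (u ^ 2 - v ^ 2) - 2 * Im w * u * v - a * (u ^ 2 + v ^ 2))%R.
Proof. unfold cquad; rewrite Cmod2_alt; destruct w; simpl; ring. Qed.

Lemma cquad_nonpos (w : C) (a : R) (z : C) : (Cmod w <= a)%R -> (cquad w a z <= 0)%R.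
Proof.
  intros hw; unfold cquad.
  pose proof (Rle_trans _ _ _ (Rle_abs _) (re_le_Cmod (w * z * z))) as hre.
  rewrite !Cmod_mult in hre.
  pose proof (pow2_ge_0 (Cmod z)).
  nra.
Qed.

Lemma is_derive_cquad_x (w : C) (a : R) (z0 : C) (x y : R) :
  is_derive (fun t => cquad w a ((t, y) - z0)) x
    (2 * (Re w - a) * (x - Re z0) - 2 * Im w * (y - Im z0))%R.
Proof.
  apply (is_derive_ext (fun t => Re w * ((t - Re z0) ^ 2 - (y - Im z0) ^ 2)
           - 2 * Im w * (t - Re z0) * (y - Im z0)
           - a * ((t - Re z0) ^ 2 + (y - Im z0) ^ 2))%R).
  - intro t; destruct z0; apply eq_sym, cquad_coord.
  - auto_derive; [easy | ring].
Qed.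

Lemma is_derive_cquad_y (w : C) (a : R) (z0 : C) (x y : R) :
  is_derive (fun t => cquad w a ((x, t) - z0)) y
    (- 2 * (Re w + a) * (y - Im z0) - 2 * Im w * (x - Re z0))%R.
Proof.
  apply (is_derive_ext (fun t => Re w * ((x - Re z0) ^ 2 - (t - Im z0) ^ 2)
           - 2 * Im w * (x - Re z0) * (t - Im z0)
           - a * ((x - Re z0) ^ 2 + (t - Im z0) ^ 2))%R).
  - intro t; destruct z0; apply eq_sym, cquad_coord.
  - auto_derive; [easy | ring].
Qed.

Lemma critical_point_cquad (w : C) (a : R) (z0 : C) (x y : R) : (Cmod w < a)%R ->
  critical_point (fun x y => cquad w a ((x, y) - z0)) x y <-> x = Re z0 /\ y = Im z0.
Proof.
  intros hw; split.
  - intros [hx hy]; cbv beta in hx, hy.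
    pose proof (eq_trans (eq_sym (is_derive_unique _ _ _ (is_derive_cquad_x w a z0 x y)))
                  (is_derive_unique _ _ _ hx)) as ex.
    pose proof (eq_trans (eq_sym (is_derive_unique _ _ _ (is_derive_cquad_y w a z0 x y)))
                  (is_derive_unique _ _ _ hy)) as ey.
    pose proof (Cmod_ge_0 w); pose proof (Cmod2_alt w).
    set (p := Re w) in *; set (q := Im w) in *.
    set (u := (x - Re z0)%R) in *; set (v := (y - Im z0)%R) in *.
    assert (hdet : (0 < a ^ 2 - p ^ 2 - q ^ 2)%R) by nra.
    assert (hu : (2 * (a ^ 2 - p ^ 2 - q ^ 2) * u
                  = - (p + a) * (2 * (p - a) * u - 2 * q * v)
                    + q * (- 2 * (p + a) * v - 2 * q * u))%R) by ring.
    assert (hv : (2 * (a ^ 2 - p ^ 2 - q ^ 2) * v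
                  = q * (2 * (p - a) * u - 2 * q * v)
                    + (p - a) * (- 2 * (p + a) * v - 2 * q * u))%R) by ring.
    rewrite ex, ey in hu, hv.
    unfold u, v in *; split; nra.
  - intros [-> ->]; split.
    + replace 0%R with (2 * (Re w - a) * (Re z0 - Re z0) - 2 * Im w * (Im z0 - Im z0))%R
        by ring.
      apply is_derive_cquad_x.
    + replace 0%R with (- 2 * (Re w + a) * (Im z0 - Im z0) - 2 * Im w * (Re z0 - Re z0))%R
        by ring.
      apply is_derive_cquad_y.
Qed.

Lemma critical_point_ext (g h : R -> R -> R) (x y : R) :
  (forall x y, g x y = h x y) -> critical_point g x y <-> critical_point h x y.
Proof.
  intros e; split; intros [hx hy]; split;
    (eapply is_derive_ext; [ | eassumption ]; intro t; simpl; now rewrite e).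
Qed.

Lemma is_lub_range_max (g : R -> R -> R) (x0 y0 : R) :
  (forall x y, (g x y <= g x0 y0)%R) ->
  is_lub (fun r => exists x y, r = g x y) (g x0 y0).
Proof.
  intros hmax; split.
  - intros r [x [y ->]]; apply hmax.
  - intros m hm; apply hm; now exists x0, y0.
Qed.

Section CompletedSquare.

Variables b c d : C.
Hypotheses (hc : (Cmod c < 1)%R) (hd : (Cmod d < 1)%R).

Let w : C := (Cconj d - Cconj c) / (RtoC (1 - Cmod c ^ 2) * (1 - c * Cconj d)).
Let a : R := (/ (1 - Cmod c ^ 2))%R.
Let z0 : C := (Cconj b * (d - c) + b * (RtoC 1 - c * Cconj d)) / RtoC (1 - Cmod d ^ 2).

Lemma f54_eq_cquad (x y : R) : f54 b c d x y = cquad w a ((x, y) - z0).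
Proof.
  pose proof (Cmod_sub_lt_Cmod_one_sub_mul_conj c d hc hd) as hlt.
  pose proof (Cmod_ge_0 c); pose proof (Cmod_ge_0 d); pose proof (Cmod_ge_0 (d - c)).
  assert (hc2 : (Cmod c ^ 2 < 1)%R) by nra.
  assert (hd2 : (Cmod d ^ 2 < 1)%R) by nra.
  assert (hN : (0 < Cmod (1 - c * Cconj d) ^ 2)%R) by nra.
  assert (hc4 : (0 < (1 - Cmod c ^ 2) ^ 2)%R) by nra.
  unfold f54, cquad, w, a, z0.
  rewrite !Cmod2_alt in *.
  destruct b as [b1 b2], c as [c1 c2], d as [d1 d2].
  unfold Cdiv, Cminus, Cplus, Cmult, Cinv, Copp, Cconj, RtoC, Re, Im in *; simpl in *.
  field; repeat split; nra.
Qed.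

Lemma Cmod_coef_lt : (Cmod w < a)%R.
Proof.
  pose proof (Cmod_sub_lt_Cmod_one_sub_mul_conj c d hc hd) as hlt.
  pose proof (Cmod_ge_0 c); pose proof (Cmod_ge_0 (d - c)).
  assert (hal : (0 < 1 - Cmod c ^ 2)%R) by nra.
  assert (hden : RtoC (1 - Cmod c ^ 2) * (1 - c * Cconj d) <> 0).
  { apply Cmod_gt_0; rewrite Cmod_mult, Cmod_R, Rabs_pos_eq by lra; nra. }
  unfold w, a; rewrite <- Cminus_conj, Cmod_div, Cmod_mult, Cmod_conj, Cmod_R, Rabs_pos_eq
    by (assumption || lra).
  pose proof (Cmod_ge_0 (1 - c * Cconj d)).
  replace (/ (1 - Cmod c ^ 2))%R
    with (Cmod (1 - c * Cconj d) / ((1 - Cmod c ^ 2) * Cmod (1 - c * Cconj d)))%R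
    by (field; lra).
  apply Rmult_lt_compat_r; [apply Rinv_0_lt_compat; nra | exact hlt].
Qed.

End CompletedSquare.

Theorem lemma5p4 (b c d : C) (hc : (Cmod c < 1)%R) (hd : (Cmod d < 1)%R) :
  exists x0 y0 : R,
    critical_point (f54 b c d) x0 y0 /\
    (forall x y : R, critical_point (f54 b c d) x y -> x = x0 /\ y = y0) /\
    ((x0, y0) : C) =
      (Cconj b * (d - c) + b * (RtoC 1 - c * Cconj d)) / RtoC (1 - Cmod d ^ 2) /\
    is_lub (fun r : R => exists x y : R, r = f54 b c d x y) (f54 b c d x0 y0) /\
    f54 b c d x0 y0 = 0%R.
Proof.
  pose proof (f54_eq_cquad b c d hc hd) as hf.
  pose proof (Cmod_coef_lt c d hc hd) as hw.
  set (z0 := (Cconj b * (d - c) + b * (RtoC 1 - c * Cconj d)) / RtoC (1 - Cmod d ^ 2)) in *.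
  assert (hcrit : forall x y, critical_point (f54 b c d) x y <-> x = Re z0 /\ y = Im z0).
  { intros x y; rewrite (critical_point_ext _ _ x y hf).
    exact (critical_point_cquad _ _ z0 x y hw). }
  assert (hzero : f54 b c d (Re z0) (Im z0) = 0%R).
  { rewrite hf; destruct z0 as [p q]; unfold Cminus, Cplus, Copp; simpl.
    rewrite cquad_coord; ring. }
  exists (Re z0), (Im z0); split; [ | split; [ | split; [ | split ]]].
  - now apply hcrit.
  - intros x y; apply hcrit.
  - now destruct z0.
  - apply is_lub_range_max; intros x y.
    rewrite hzero, hf; apply cquad_nonpos, Rlt_le, hw.
  - exact hzero.
Qed.
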